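(* Let $K$, $I$, $I'$, $\lambda_0$ and $f_2^{\mathrm{tr}}$ be as in the context, and suppose $\mathbb P(I\cap I'\ne\emptyset)<1$. Then $\sup_{\mathrm{tr}\in\mathbb N}\mathrm{tr}\,f_2^{\mathrm{tr}}(\lambda)<\infty$ for all $\lambda<\lambda_0$.
   Context: Let $K$ be a probability distribution on $\mathbb N=\{1,2,\dots\}$ (with $\lim_{n\to\infty}\log K(n)/\log n=-(1+\alpha)$ for some $\alpha\in[0,\infty)$). Let $I$ and $I'$ be the sets of renewal times in $\mathbb N$ (excluding $0$) of two independent renewal processes started at $0$ with inter-arrival law $K$, and $\lambda_0:=-\log\mathbb P(I\cap I'\ne\emptyset)$. For $\mathrm{tr}\in\mathbb N$ let $K^{\mathrm{tr}}(n)=K(n)$ for $1\le n\le\mathrm{tr}-1$, $K^{\mathrm{tr}}(\mathrm{tr})=\sum_{m\ge\mathrm{tr}}K(m)$, $K^{\mathrm{tr}}(n)=0$ for $n>\mathrm{tr}$. Let $J,J'\subseteq\mathbb N_0$ be the renewal sets (containing $0$) of two independent renewal processes started at $0$ with inter-arrival law $K^{\mathrm{tr}}$, and define $f_2^{\mathrm{tr}}(\lambda):=\lim_{n\to\infty}\frac1n\log E\big[\exp\big(\lambda\sum_{k=0}^{n-1}1_{\{k\in J\cap J'\}}\big)\big]$. *)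

From HB Require Import structures.
From mathcomp Require Import all_boot all_order all_algebra.
From mathcomp Require Import all_classical all_reals all_analysis.
Unset Printing Implicit Defensive.
Import Order.TTheory GRing.Theory Num.Theory.
Import numFieldNormedType.Exports.
Local Open Scope ring_scope.

Section Renewal.
Variable R : realType.

(* tail of an inter-arrival law L on {1,2,...} (summing to 1):
   P(T > m) = 1 - P(1 <= T <= m) *)
Definition tailK (L : nat -> R) (m : nat) : R :=
  1 - \sum_(1 <= j < m.+1) L j.

(* Product of inter-arrival probabilities along the sorted list of renewal
   times s (previous renewal at prev), times the probability that the next
   inter-arrival overshoots the window end n. *)
Fixpoint renewal_path (L : nat -> R) (n prev : nat) (s : seq nat) : R :=
  match s with
  | [::] => tailK L (n - prev)%N
  | a :: s' => L (a - prev)%N * renewal_path L n a s'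
  end.

(* For a renewal process started at 0 with inter-arrival law L, the
   probability that its set of renewal times in the window {1,...,n}
   is exactly {i.+1 | i \in A}  (A : {set 'I_n}). *)
Definition renewal_win (L : nat -> R) (n : nat) (A : {set 'I_n}) : R :=
  renewal_path L n 0 (sort leq [seq (val i).+1 | i <- enum A]).

(* P(I \cap I' \cap {1..n} <> empty) for two independent copies. *)
Definition meet_prob_win (L : nat -> R) (n : nat) : R :=
  \sum_(A : {set 'I_n}) \sum_(B : {set 'I_n} | (A :&: B != finset.set0)%SET)
     renewal_win L n A * renewal_win L n B.

(* P(I \cap I' <> empty) = limit of the increasing window probabilities *)
Definition meet_prob (L : nat -> R) : R := limn (meet_prob_win L).

Definition Ktrunc (L : nat -> R) (tr : nat) (n : nat) : R :=
  if (n < tr)%N then L n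
  else if n == tr then 1 - \sum_(1 <= j < tr) L j   (* = sum_{m >= tr} L m *)
  else 0.

(* E[exp(lam * sum_{k=0}^{n-1} 1_{k \in J \cap J'})] where J, J' contain 0;
   for n = n'.+1 the window is {0} u {1..n'}, 0 always lies in J \cap J'. *)
Definition exp_moment (L : nat -> R) (lam : R) (n : nat) : R :=
  match n with
  | 0 => 1
  | n'.+1 =>
    \sum_(A : {set 'I_n'}) \sum_(B : {set 'I_n'})
      renewal_win L n' A * renewal_win L n' B
        * expR (lam * (1 + #|A :&: B|%:R))
  end.

Definition f2tr (L : nat -> R) (tr : nat) (lam : R) : R :=
  limn (fun n : nat => ln (exp_moment (Ktrunc L tr) lam n) / n%:R).

End Renewal.

From HB Require Import structures.
From mathcomp Require Import all_boot all_order all_algebra.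
From mathcomp Require Import all_classical all_reals all_analysis.
From mathcomp Require Import ring lra zify.
Import Order.TTheory GRing.Theory Num.Theory.
Import numFieldNormedType.Exports.

Local Open Scope classical_set_scope.
Local Open Scope ring_scope.

(* Write Z_n(r) = E[r^|J ∩ J' ∩ {1..n}|] for two independent chains, computed by
   following both chains' ages along the bit sequences of their renewal sets.
   It satisfies the renewal equation Z_n = D_n + Σ_{k<n} B_k r Z_{n-k-1}, where
   D_n is the probability of no common renewal in {1..n} and B_k that of a first
   common renewal at time k+1; for r = 1 this gives Σ_{k<n} B_k = P(I ∩ I' ∩
   {1..n} ≠ ∅) ≤ p. Truncating the law at tr leaves B_k unchanged for k+1 < tr,
   so if ρ^tr = ε then Σ_k B_k^tr ρ^(k+1) ≤ p + ε, and the renewal equation keeps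
   Z_n^tr ρ^n bounded as soon as e^λ (p + ε) < 1, which a small ε achieves for
   λ < λ_0. Hence f_2^tr(λ) ≤ -ln ρ = -ln ε / tr for every tr. *)

Fixpoint bitseqs (n : nat) : seq bitseq :=
  if n is n'.+1 then
    [seq false :: b | b <- bitseqs n'] ++ [seq true :: b | b <- bitseqs n']
  else [:: [::]].

Lemma mem_bitseqs n b : (b \in bitseqs n) = (size b == n).
Proof.
elim: n b => [|n IH] [|x b] //=; rewrite mem_cat.
  by apply/negP => /orP[] /mapP[].
apply/idP/idP => [/orP[] /mapP[c c_in [_ ->]]|]; rewrite ?eqSS -?IH //.
by case: x => b_n; apply/orP; [right|left]; apply: map_f.
Qed.

Lemma bitseqs_uniq n : uniq (bitseqs n).
Proof.
have cons_inj x : injective (@cons bool x) by move=> u v [].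
elim: n => //= n IH; rewrite cat_uniq !map_inj_uniq // IH /= andbT.
by apply/hasPn => _ /mapP[b _ ->]; apply/mapP => -[].
Qed.

Definition set_bits n (A : {set 'I_n}) : bitseq := [seq i \in A | i <- enum 'I_n].
Arguments set_bits {n}.

Lemma size_set_bits n (A : {set 'I_n}) : size (set_bits A) = n.
Proof. by rewrite size_map size_enum_ord. Qed.

Lemma nth_set_bits n (A : {set 'I_n}) (i : 'I_n) : nth false (set_bits A) i = (i \in A).
Proof. by rewrite (nth_map i) ?size_enum_ord // nth_ord_enum. Qed.

Lemma set_bits_inj n : injective (@set_bits n).
Proof. by move=> A B eAB; apply/setP => i; rewrite -!nth_set_bits eAB. Qed.

Lemma big_set_bits (V : nmodType) n (F : bitseq -> V) :
  \sum_(A : {set 'I_n}) F (set_bits A) = \sum_(b <- bitseqs n) F b.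
Proof.
rewrite -(big_map set_bits predT F); apply/perm_big/uniq_perm.
- by rewrite map_inj_uniq ?index_enum_uniq //; exact: set_bits_inj.
- exact: bitseqs_uniq.
move=> b; rewrite mem_bitseqs; apply/mapP/eqP => [[A _ ->]|<-].
  exact: size_set_bits.
exists [set i : 'I_(size b) | nth false b i]%SET; first by rewrite mem_index_enum.
apply: (@eq_from_nth _ false); rewrite ?size_set_bits // => i ib.
by rewrite (@nth_set_bits _ _ (Ordinal ib)) inE.
Qed.

Lemma enum_setE n (A : {set 'I_n}) : enum A = [seq i <- enum 'I_n | i \in A].
Proof. by rewrite enumT. Qed.

Lemma renewal_times_mask n (A : {set 'I_n}) :
  sort leq [seq (val i).+1 | i <- enum A] = mask (set_bits A) (iota 1 n).
Proof.
have -> : [seq (val i).+1 | i <- enum A] = mask (set_bits A) (iota 1 n).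
  rewrite enum_setE filter_mask map_mask; congr mask.
  by rewrite (map_comp succn val) val_enum_ord (iotaDl 1 0).
by apply/sorted_sort/sorted_mask/iota_sorted; exact: leq_trans.
Qed.

Definition common_ones (b b' : bitseq) : nat :=
  count (fun xy => xy.1 && xy.2) (zip b b').

Lemma common_ones_cons x y b b' :
  common_ones (x :: b) (y :: b') = ((x && y) + common_ones b b')%N.
Proof. by []. Qed.

Lemma card_setI_bits n (A B : {set 'I_n}) :
  #|A :&: B| = common_ones (set_bits A) (set_bits B).
Proof.
rewrite /common_ones zip_map count_map cardE enum_setE size_filter.
by apply: eq_count => i; rewrite inE.
Qed.

Section RenewalChain.
Variables (R : realType) (L : nat -> R).
Local Notation tail := (tailK R L).

(* [g] is the age of the chain: the time elapsed since its last renewal. *)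
Fixpoint path_weight (g : nat) (b : bitseq) : R :=
  if b is x :: b' then
    if x then L g.+1 * path_weight 0 b' else path_weight g.+1 b'
  else tail g.

Lemma renewal_path_mask b q prev : (prev <= q)%N ->
  renewal_path R L (q + size b) prev (mask b (iota q.+1 (size b))) =
  path_weight (q - prev) b.
Proof.
elim: b q prev => [|[] b IH] q prev q_prev /=; first by rewrite addn0.
- by rewrite -addSnnS IH // subnn subSn.
- by rewrite -addSnnS IH ?subSn // (leq_trans q_prev).
Qed.

Lemma renewal_win_bits n (A : {set 'I_n}) :
  renewal_win R L n A = path_weight 0 (set_bits A).
Proof.
have := @renewal_path_mask (set_bits A) 0 0 (leqnn 0).
by rewrite add0n size_set_bits => <-; rewrite /renewal_win renewal_times_mask.
Qed.

Fixpoint meet_moment (r : R) (n g g' : nat) : R :=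
  if n is n'.+1 then
    meet_moment r n' g.+1 g'.+1 + L g'.+1 * meet_moment r n' g.+1 0
    + (L g.+1 * meet_moment r n' 0 g'.+1
       + L g.+1 * L g'.+1 * r * meet_moment r n' 0 0)
  else tail g * tail g'.

Fixpoint first_meet (k g g' : nat) : R :=
  if k is k'.+1 then
    first_meet k' g.+1 g'.+1 + L g'.+1 * first_meet k' g.+1 0
    + L g.+1 * first_meet k' 0 g'.+1
  else L g.+1 * L g'.+1.

Lemma meet_moment_sum r n g g' : meet_moment r n g g' =
  \sum_(b <- bitseqs n) \sum_(b' <- bitseqs n)
     path_weight g b * path_weight g' b' * r ^+ common_ones b b'.
Proof.
elim: n g g' => [|n IH] g g' /=; first by rewrite !big_seq1 mulr1.
rewrite big_cat !big_map.
under [X in _ = X + _]eq_bigr do rewrite big_cat !big_map.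
under [X in _ = _ + X]eq_bigr do rewrite big_cat !big_map.
rewrite !big_split /= !IH; congr (_ + _ + (_ + _)); rewrite ?mulr_sumr;
  apply: eq_bigr => b _; rewrite ?mulr_sumr; apply: eq_bigr => b' _;
  rewrite /= common_ones_cons ?add0n ?add1n ?exprS; ring.
Qed.

Lemma meet_moment_renewal r n g g' : meet_moment r n g g' =
  meet_moment 0 n g g'
  + \sum_(0 <= k < n) first_meet k g g' * r * meet_moment r (n - k.+1) 0 0.
Proof.
elim: n g g' => [|n IH] g g' /=; first by rewrite big_geq // addr0.
rewrite (IH g.+1 g'.+1) (IH g.+1 0) (IH 0 g'.+1) big_nat_recl // subn1 /=.
have -> : \sum_(0 <= k < n)
            first_meet k.+1 g g' * r * meet_moment r (n.+1 - k.+2) 0 0 =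
    \sum_(0 <= k < n) first_meet k g.+1 g'.+1 * r * meet_moment r (n - k.+1) 0 0
    + L g'.+1 * \sum_(0 <= k < n) first_meet k g.+1 0 * r * meet_moment r (n - k.+1) 0 0
    + L g.+1 * \sum_(0 <= k < n) first_meet k 0 g'.+1 * r * meet_moment r (n - k.+1) 0 0.
  by rewrite !mulr_sumr -!big_split; apply: eq_bigr => k _ /=; rewrite subSS; ring.
ring.
Qed.

Lemma tail0 : tail 0 = 1.
Proof. by rewrite /tailK big_geq // subr0. Qed.

Lemma tailS g : tail g = L g.+1 + tail g.+1.
Proof. by rewrite /tailK (big_nat_recr g.+1) //=; ring. Qed.

Lemma meet_moment1 n g g' : meet_moment 1 n g g' = tail g * tail g'.
Proof.
elim: n g g' => [|n IH] g g' //=.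
by rewrite !IH tail0 (tailS g) (tailS g'); ring.
Qed.

Lemma first_meet_total n :
  meet_moment 0 n 0 0 + \sum_(0 <= k < n) first_meet k 0 0 = 1.
Proof.
have := meet_moment_renewal 1 n 0 0; rewrite meet_moment1 tail0 mulr1 => ->.
by congr (_ + _); apply: eq_bigr => k _; rewrite meet_moment1 tail0 !mulr1.
Qed.

Lemma sum_renewal_win_pairs r n :
  \sum_(A : {set 'I_n}) \sum_(B : {set 'I_n})
    renewal_win R L n A * renewal_win R L n B * r ^+ #|A :&: B|
  = meet_moment r n 0 0.
Proof.
rewrite meet_moment_sum -big_set_bits; apply: eq_bigr => A _.
rewrite -big_set_bits; apply: eq_bigr => B _.
by rewrite !renewal_win_bits card_setI_bits.
Qed.

Lemma meet_prob_win_first_meet n :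
  meet_prob_win R L n = \sum_(0 <= k < n) first_meet k 0 0.
Proof.
have no_meet_or_meet : meet_moment 1 n 0 0 = 1 by rewrite meet_moment1 tail0 mulr1.
rewrite -[RHS](addKr (meet_moment 0 n 0 0)) first_meet_total addrC.
rewrite -no_meet_or_meet -!sum_renewal_win_pairs -sumrB.
apply: eq_bigr => A _; rewrite -sumrB big_mkcond; apply: eq_bigr => B _ /=.
by rewrite expr1n expr0n cards_eq0; case: eqP => _; rewrite ?mulr0 ?mulr1 ?subrr ?subr0.
Qed.

Lemma exp_moment_meet_moment lam n :
  exp_moment R L lam n.+1 = expR lam * meet_moment (expR lam) n 0 0.
Proof.
rewrite -sum_renewal_win_pairs mulr_sumr; apply: eq_bigr => A _.
rewrite mulr_sumr; apply: eq_bigr => B _.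
by rewrite mulrDr mulr1 expRD expRM_natr; ring.
Qed.

Section Nonneg.
Hypotheses (L_ge0 : forall j, 0 <= L j)
  (L_psum_le1 : forall m, \sum_(1 <= j < m) L j <= 1).

Lemma tail_ge0 g : 0 <= tail g.
Proof. by rewrite subr_ge0. Qed.

Lemma first_meet_ge0 k g g' : 0 <= first_meet k g g'.
Proof.
by elim: k g g' => [|k IH] g g' /=; rewrite ?addr_ge0 ?mulr_ge0.
Qed.

Lemma meet_moment_ge0 r n g g' : 0 <= r -> 0 <= meet_moment r n g g'.
Proof.
move=> r_ge0; elim: n g g' => [|n IH] g g' /=;
  by rewrite ?addr_ge0 ?mulr_ge0 ?tail_ge0.
Qed.

Lemma sum_first_meet_le1 n : \sum_(0 <= k < n) first_meet k 0 0 <= 1.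
Proof. by rewrite -(first_meet_total n) lerDr meet_moment_ge0. Qed.

Lemma no_meet_le1 n : meet_moment 0 n 0 0 <= 1.
Proof.
rewrite -(first_meet_total n) lerDl.
by apply: sumr_ge0 => k _; exact: first_meet_ge0.
Qed.

End Nonneg.
End RenewalChain.

Lemma eq_first_meet (R : realType) (L1 L2 : nat -> R) m k g g' :
  (forall j, (j <= m)%N -> L1 j = L2 j) ->
  (g + k.+1 <= m)%N -> (g' + k.+1 <= m)%N ->
  first_meet R L1 k g g' = first_meet R L2 k g g'.
Proof.
move=> eqL; elim: k g g' => [|k IH] g g' gk g'k /=; first by rewrite !eqL //; lia.
by rewrite !eqL ?IH //; lia.
Qed.

Section Truncation.
Variables (R : realType) (K : nat -> R) (tr : nat).
Hypotheses (K_ge0 : forall n, 0 <= K n)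
  (K_psum_le1 : forall m, \sum_(1 <= j < m) K j <= 1).

Lemma Ktrunc_lt j : (j < tr)%N -> Ktrunc R K tr j = K j.
Proof. by rewrite /Ktrunc => ->. Qed.

Lemma Ktrunc_ge0 n : 0 <= Ktrunc R K tr n.
Proof. by rewrite /Ktrunc; case: ltnP => // _; case: eqP; rewrite ?subr_ge0. Qed.

Lemma Ktrunc_psum_le1 m : (0 < tr)%N -> \sum_(1 <= j < m) Ktrunc R K tr j <= 1.
Proof.
move=> tr_gt0; have [m_le|tr_lt] := leqP m tr.
  rewrite (@eq_big_nat _ _ _ 1 m _ K) // => j /andP[_ j_lt].
  by rewrite Ktrunc_lt // (leq_trans j_lt).
rewrite (@big_cat_nat _ _ _ tr 1 m _ _ tr_gt0 (ltnW tr_lt)) /= (big_ltn tr_lt).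
rewrite (@eq_big_nat _ _ _ 1 tr _ K) => [|j /andP[_]]; last exact: Ktrunc_lt.
have -> : \sum_(tr.+1 <= j < m) Ktrunc R K tr j = 0.
  apply: big1_seq => j /andP[_]; rewrite mem_index_iota => /andP[tr_j _].
  by rewrite /Ktrunc ltnNge (ltnW tr_j) (gtn_eqF tr_j).
by rewrite /Ktrunc ltnn eqxx addr0 addrC subrK.
Qed.

End Truncation.

Lemma renewal_seq_bound (R : numDomainType) (z d b : nat -> R) (rho s M : R) :
  0 <= rho <= 1 -> 0 <= M -> 1 + s * M <= M ->
  (forall n, 0 <= d n <= 1) -> (forall k, 0 <= b k) ->
  (forall n, \sum_(0 <= k < n) b k * rho ^+ k.+1 <= s) ->
  (forall n, z n = d n + \sum_(0 <= k < n) b k * z (n - k.+1)%N) ->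
  forall n, z n * rho ^+ n <= M.
Proof.
move=> /andP[rho_ge0 rho_le1] M_ge0 sM_le d01 b_ge0 b_sum z_eq.
elim/ltn_ind => n IH; rewrite z_eq mulrDl; apply: le_trans sM_le; apply: lerD.
  have /andP[d_ge0 d_le1] := d01 n.
  by apply: le_trans d_le1; rewrite ler_piMr // exprn_ile1.
apply: le_trans (ler_wpM2r M_ge0 (b_sum n)); rewrite !mulr_suml.
apply: ler_sum_nat => k /andP[_ k_lt].
have -> : rho ^+ n = rho ^+ k.+1 * rho ^+ (n - k.+1) by rewrite -exprD subnKC.
rewrite mulrACA ler_wpM2l ?mulr_ge0 ?exprn_ge0 // IH //; lia.
Qed.

Lemma limn_ln_div_le (R : realType) (x : R ^nat) (B c : R) : 0 < B -> 0 <= c ->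
  (forall n, x n.+1 <= B * expR (n%:R * c)) ->
  limn (fun n => ln (x n) / n%:R) <= c.
Proof.
move=> B_gt0 c_ge0 x_le; set u := fun n => ln (x n) / n%:R.
have ln_x_le n : ln (x n.+1) <= `|ln B| + n%:R * c.
  have [x_le0|x_gt0] := lerP (x n.+1) 0.
    by rewrite ln0 // addr_ge0 ?mulr_ge0.
  apply: le_trans (_ : ln (B * expR (n%:R * c)) <= _).
    by rewrite ler_ln ?posrE ?mulr_gt0 ?expR_gt0.
  by rewrite lnM ?posrE ?expR_gt0 // expRK lerD2r ler_norm.
have u_le n : u n.+1 <= c + `|ln B| * harmonic n.
  rewrite /u /harmonic /= ler_pdivrMr ?ltr0n // mulrDl -mulrA mulVf ?pnatr_eq0 //.
  rewrite mulr1; apply: le_trans (ln_x_le n) _.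
  by rewrite addrC lerD2r mulrC ler_wpM2l // ler_nat.
(* A divergent sequence has [limn] equal to 0. *)
have [u_cvg|/dvgP ->] := pselect (cvgn u); last exact: c_ge0.
have lim_c : (fun n => c + `|ln B| * harmonic n) @ \oo --> c.
  rewrite -[X in _ --> X]addr0 -[X in _ + X](mulr0 `|ln B|).
  exact: cvgD (cvg_cst _) (cvgM (cvg_cst _) cvg_harmonic).
have uS_cvg : [sequence u n.+1]_n @ \oo --> limn u by rewrite cvg_shiftS.
by apply: (ler_cvg_to uS_cvg lim_c); apply: nearW => n; exact: u_le.
Qed.

Lemma expR_mul_lt1 {R : realType} {lam p : R} :
  0 <= p -> lam < - ln p -> expR lam * p < 1.
Proof.
move=> p_ge0; have [->|p_gt0] := eqVneq p 0; first by rewrite mulr0.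
have {p_gt0 p_ge0}p_gt0 : 0 < p by rewrite lt0r p_gt0.
by rewrite -ltr_expR expRN lnK ?posrE // -ltr_pdivlMr // div1r.
Qed.

Lemma exists_slack {R : realFieldType} {r p : R} : 0 < r -> 0 <= p -> r * p < 1 ->
  exists2 eps, 0 < eps <= 1 & exists2 M, 0 < M & 1 + r * (p + eps) * M <= M.
Proof.
move=> r_gt0 p_ge0 rp_lt1; set del := 1 - r * p.
have del_gt0 : 0 < del by rewrite subr_gt0.
exists (Num.min 1 (del / (2 * r))).
  by rewrite lt_min ltr01 divr_gt0 ?mulr_gt0 //= ge_min lexx.
exists (2 / del); first by rewrite divr_gt0.
have r_eps : r * Num.min 1 (del / (2 * r)) <= del / 2.
  have min_le : Num.min 1 (del / (2 * r)) <= del / (2 * r) by rewrite ge_min lexx orbT.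
  apply: le_trans (ler_wpM2l (ltW r_gt0) min_le) _.
  by rewrite [leLHS](_ : _ = del / 2) //; field; rewrite gt_eqF.
rewrite [leRHS](_ : _ = 1 + (1 - del / 2) * (2 / del)); last by field; rewrite gt_eqF.
rewrite lerD2l ler_wpM2r ?divr_ge0 ?(ltW del_gt0) //.
by rewrite mulrDr; move: r_eps; rewrite /del; lra.
Qed.

Section TruncatedEstimate.
Context {R : realType} {K : nat -> R} {p : R} {tr : nat}.
Hypotheses (K_ge0 : forall n, 0 <= K n)
  (K_psum_le1 : forall m, \sum_(1 <= j < m) K j <= 1)
  (meet_prob_win_le : forall n, meet_prob_win R K n <= p)
  (tr_gt0 : (0 < tr)%N).
Local Notation Kt := (Ktrunc R K tr).

Let Kt_ge0 n : 0 <= Kt n.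
Proof. exact: Ktrunc_ge0. Qed.

Let Kt_psum_le1 m : \sum_(1 <= j < m) Kt j <= 1.
Proof. exact: Ktrunc_psum_le1. Qed.

Lemma sum_first_meet_trunc_le (eps rho : R) n : 0 <= rho <= 1 -> rho ^+ tr = eps ->
  \sum_(0 <= k < n) first_meet R Kt k 0 0 * rho ^+ k.+1 <= p + eps.
Proof.
move=> /andP[rho_ge0 rho_le1] rho_tr.
have eps_ge0 : 0 <= eps by rewrite -rho_tr exprn_ge0.
apply: (@le_trans _ _ (\sum_(0 <= k < n)
  (first_meet R K k 0 0 + eps * first_meet R Kt k 0 0))).
  apply: ler_sum => k _.
  have Bt_ge0 : 0 <= first_meet R Kt k 0 0 by exact: first_meet_ge0.
  have B_ge0 : 0 <= first_meet R K k 0 0 by exact: first_meet_ge0.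
  have [k_lt|tr_le] := ltnP k.+1 tr.
    have -> : first_meet R Kt k 0 0 = first_meet R K k 0 0.
      apply: (@eq_first_meet _ _ _ tr.-1); try lia.
      by move=> j j_le; rewrite Ktrunc_lt //; lia.
    by rewrite ler_wpDr ?mulr_ge0 // ler_piMr // exprn_ile1.
  rewrite ler_wpDl // mulrC ler_wpM2r // -rho_tr.
  exact: ler_wiXn2l.
rewrite big_split /= -mulr_sumr; apply: lerD.
  by rewrite -meet_prob_win_first_meet.
by rewrite ler_piMr // sum_first_meet_le1.
Qed.

Lemma meet_moment_trunc_le (r eps rho M : R) :
  0 <= r -> 0 <= rho <= 1 -> rho ^+ tr = eps -> 0 <= M ->
  1 + r * (p + eps) * M <= M ->
  forall n, meet_moment R Kt r n 0 0 * rho ^+ n <= M.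
Proof.
move=> r_ge0 rho01 rho_tr M_ge0 sM_le.
apply: (@renewal_seq_bound _ _ (fun n => meet_moment R Kt 0 n 0 0)
  (fun k => first_meet R Kt k 0 0 * r) _ _ _ rho01 M_ge0 sM_le).
- by move=> n; rewrite meet_moment_ge0 ?no_meet_le1.
- by move=> k; rewrite mulr_ge0 ?first_meet_ge0.
- move=> n; under eq_bigr do rewrite mulrAC mulrC.
  by rewrite -mulr_sumr ler_wpM2l // sum_first_meet_trunc_le.
- by move=> n; rewrite meet_moment_renewal.
Qed.

Lemma f2tr_trunc_le (lam eps M : R) : 0 < eps <= 1 -> 0 < M ->
  1 + expR lam * (p + eps) * M <= M -> tr%:R * f2tr R K tr lam <= - ln eps.
Proof.
move=> /andP[eps_gt0 eps_le1] M_gt0 sM_le.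
have tr_pos : 0 < tr%:R :> R by rewrite ltr0n.
rewrite mulrC -ler_pdivlMr //; set c := - ln eps / tr%:R.
have c_ge0 : 0 <= c by rewrite divr_ge0 ?ler0n // oppr_ge0 ln_le0.
have rho_tr : expR (- c) ^+ tr = eps.
  by rewrite -expRM_natr mulNr divfK ?gt_eqF // opprK lnK.
have rho01 : 0 <= expR (- c) <= 1 by rewrite expR_ge0 expR_le1 oppr_le0.
have moment_le := meet_moment_trunc_le (expR lam) eps (expR (- c)) M
  (expR_ge0 lam) rho01 rho_tr (ltW M_gt0) sM_le.
apply: (@limn_ln_div_le _ _ (expR lam * M)) => [||n]; rewrite ?mulr_gt0 ?expR_gt0 //.
rewrite exp_moment_meet_moment -mulrA ler_wpM2l ?expR_ge0 //.
rewrite (_ : M * _ = M / expR (- c) ^+ n).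
  by rewrite ler_pdivlMr ?exprn_gt0 ?expR_gt0.
by rewrite -expRM_natr mulNr expRN invrK (mulrC c).
Qed.

End TruncatedEstimate.

Lemma psum_le1_of_cvg {R : realType} {K : nat -> R} : (forall n, 0 <= K n) ->
  (fun n : nat => \sum_(0 <= k < n) K k) @ \oo --> (1 : R) ->
  forall m, \sum_(1 <= j < m) K j <= 1.
Proof.
move=> K_ge0 sum_cvg [|m]; first by rewrite big_geq.
have mono : nondecreasing_seq (fun n => \sum_(0 <= k < n) K k).
  by apply: nondecreasing_series => k _ _; exact: K_ge0.
have sum_le1 := nondecreasing_cvgn_le mono (cvgP _ sum_cvg) m.+1.
rewrite (cvg_lim _ sum_cvg) // big_ltn // in sum_le1.
by apply: le_trans sum_le1; rewrite lerDr.
Qed.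

Lemma meet_prob_win_le_meet_prob {R : realType} {K : nat -> R} :
  (forall n, 0 <= K n) -> (forall m, \sum_(1 <= j < m) K j <= 1) ->
  forall n, meet_prob_win R K n <= meet_prob R K.
Proof.
move=> K_ge0 K_psum_le1.
have mpwE : meet_prob_win R K = fun n => \sum_(0 <= k < n) first_meet R K k 0 0.
  by apply/funext => n; exact: meet_prob_win_first_meet.
have mono : nondecreasing_seq (meet_prob_win R K).
  by rewrite mpwE; apply: nondecreasing_series => k _ _; exact: first_meet_ge0.
have bounded : has_ubound (range (meet_prob_win R K)).
  by exists 1 => _ [n _ <-]; rewrite mpwE sum_first_meet_le1.
exact: nondecreasing_cvgn_le mono (nondecreasing_is_cvgn mono bounded).
Qed.

Theorem lemmaA1 (R : realType) (K : nat -> R) :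
  (forall n, 0 <= K n) -> K 0%N = 0 ->
  (fun n : nat => \sum_(0 <= k < n) K k) @ \oo --> (1 : R) ->
  (exists alpha : R, 0 <= alpha /\
     (fun n : nat => ln (K n) / ln (n%:R : R)) @ \oo --> - (1 + alpha)) ->
  meet_prob R K < 1 ->
  forall lam : R, lam < - ln (meet_prob R K) ->
  exists C : R, forall tr : nat, (0 < tr)%N -> tr%:R * f2tr R K tr lam <= C.
Proof.
move=> K_ge0 _ sum_cvg _ _ lam lam_lt.
have K_psum_le1 := psum_le1_of_cvg K_ge0 sum_cvg.
have mpw_le := meet_prob_win_le_meet_prob K_ge0 K_psum_le1.
have p_ge0 : 0 <= meet_prob R K.
  by have := mpw_le 0%N; rewrite meet_prob_win_first_meet big_geq.
have [eps eps01 [M M_gt0 sM_le]] :=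
  exists_slack (expR_gt0 lam) p_ge0 (expR_mul_lt1 p_ge0 lam_lt).
exists (- ln eps) => tr tr_gt0.
exact: f2tr_trunc_le K_ge0 K_psum_le1 mpw_le tr_gt0 lam eps M eps01 M_gt0 sM_le.
Qed.
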